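(* For every $l\ge 0$, up to a unit of $\mathbb{Z}[q,q^{-1}]$, $$\mathrm{GCD}(f_{l,0},\dots,f_{l,l})=\prod_{m\ge1}\Phi_m^{t_{l,m}},\qquad t_{l,m}=\begin{cases}\lfloor \tfrac{l+1}{m}\rfloor-1 & 1\le m\le l,\\ 0 & m>l.\end{cases}$$
   Context: In $\mathbb{Z}[q,q^{-1}]$ set $\{i\}_q=q^i-1$, $\{i\}_{q,n}=\{i\}_q\cdots\{i-n+1\}_q$ (equal to $1$ for $n=0$), $\{n\}_q!=\{n\}_{q,n}$, and $f_{l,k}=\{l-k\}_q!\{k\}_q!$ for $0\le k\le l$. GCD is a greatest common divisor in the UFD $\mathbb{Z}[q,q^{-1}]$ (defined up to units $\pm q^j$). $\Phi_m$ is the $m$th cyclotomic polynomial; $\lfloor r\rfloor$ is the floor of $r$. *)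

From HB Require Import structures.
From mathcomp Require Import all_boot all_order all_algebra all_field.
Set Implicit Arguments. Unset Strict Implicit. Unset Printing Implicit Defensive.
Import GRing.Theory.
Local Open Scope ring_scope.

Definition qbr (i : nat) : {poly int} := 'X^i - 1.

(* {i}_{q,n} = {i}_q {i-1}_q ... {i-n+1}_q  (= 1 for n = 0); used with n <= i. *)
Definition qpoch (i n : nat) : {poly int} := \prod_(j < n) qbr (i - j)%N.

Definition qfact (n : nat) : {poly int} := qpoch n n.

Definition fLK (l k : nat) : {poly int} := qfact (l - k)%N * qfact k.

(* Elements of Z[q,q^{-1}] represented as pairs (p, j) standing for p * q^{-j},
   p in Z[q].  Every Laurent polynomial has such a representation. *)
Definition laurent := ({poly int} * nat)%type.
Definition lpoly (p : {poly int}) : laurent := (p, 0%N).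

(* Divisibility in Z[q,q^{-1}]:  a | b  iff  b = a * c for a Laurent c = (c, k),
   i.e.  b.1 q^{-b.2} = a.1 q^{-a.2} c q^{-k},  cleared of denominators. *)
Definition ldvd (a b : laurent) : Prop :=
  exists (c : {poly int}) (k : nat),
    b.1 * 'X^(a.2 + k) = a.1 * c * 'X^(b.2).

(* g is a greatest common divisor (in the UFD Z[q,q^{-1}], hence determined up
   to units +-q^j) of the family F i, i in I. *)
Definition is_lgcd (I : Type) (F : I -> laurent) (g : laurent) : Prop :=
  (forall i, ldvd g (F i)) /\
  (forall d : laurent, (forall i, ldvd d (F i)) -> ldvd d g).

Definition tLM (l m : nat) : nat :=
  if (1 <= m <= l)%N then ((l.+1 %/ m) - 1)%N else 0%N.

(* Since q^n - 1 is the product of the cyclotomic polynomials Phi_m, m | n,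
   every q-factorial factors as {n}_q! = prod_m Phi_m ^ (n / m), hence
   f_{l,k} = prod_m Phi_m ^ e_{l,k}(m) with e_{l,k}(m) = (l-k)/m + k/m.
   Elementary arithmetic gives t_{l,m} <= e_{l,k}(m) for every k, with
   equality at k = m - 1; so g = prod_m Phi_m ^ t_{l,m} divides every f_{l,k}.
   Conversely, a Laurent common divisor d gives, over Q, a polynomial
   dividing every f_{l,k} * X^N.  As the Phi_m are pairwise coprime and prime
   to X, the exponent of each Phi_m in a multiple f_{l,0} X^N of d may be
   lowered to t_{l,m} using f_{l,m-1} X^N (lemma dvdp_lower_exponents), so d
   divides g X^N over Q.  Finally Gauss' lemma brings this back to Z[q]: d
   divides the monic f_{l,0} X^n, so its content is a unit. *)
From HB Require Import structures.
From mathcomp Require Import all_boot all_order all_algebra all_field.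
From mathcomp Require Import ring zify.
Set Implicit Arguments.
Unset Strict Implicit.
Unset Printing Implicit Defensive.
Import GRing.Theory Num.Theory.
Local Open Scope ring_scope.

Local Notation pZtoQ := (map_poly (intr : int -> rat)).

Section PolyDivisibility.
Variable F : fieldType.

(* Cancellation of a coprime pair: a Bezout relation u A + v B = 1 gives
   X = u (X A) + v (X B). *)
Lemma dvdp_coprime_mulr (A B X d : {poly F}) :
  coprimep A B -> d %| X * A -> d %| X * B -> d %| X.
Proof.
case/Bezout_coprimepP => [[u v] /= uv1] dXA dXB.
rewrite -[X]mulr1 -(eqp_dvdr _ (eqp_mull X uv1)) mulrDr.
by apply: dvdp_add; rewrite mulrCA dvdp_mull.
Qed.

Lemma dvdp_lower_exponent (P C Z d : {poly F}) (e t : nat) :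
  coprimep P C -> d %| P ^+ t * C -> d %| P ^+ e * Z -> d %| P ^+ t * Z.
Proof.
move=> cPC dPC dPZ; apply: (@dvdp_coprime_mulr (P ^+ e) C).
- exact: coprimep_expl.
- by rewrite -mulrA [Z * _]mulrC dvdp_mull.
- by rewrite mulrAC dvdp_mulr.
Qed.

Lemma dvdp_lower_exponents (I : eqType) (s : seq I) (P : I -> {poly F})
    (e t : I -> nat) (d Y : {poly F}) :
  {in s, forall m, exists2 C, coprimep (P m) C & d %| P m ^+ t m * C} ->
  d %| (\prod_(m <- s) P m ^+ e m) * Y -> d %| (\prod_(m <- s) P m ^+ t m) * Y.
Proof.
elim: s Y => [|m s IH] Y witness; first by rewrite !big_nil.
rewrite !big_cons -!mulrA => dY.
have [C cC dC] := witness m (mem_head _ _).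
rewrite mulrCA; apply: IH => [j js|]; first by apply: witness; rewrite inE js orbT.
by rewrite mulrCA; apply: dvdp_lower_exponent cC dC dY.
Qed.

Lemma dvdp_Xn_common (I : finType) (d : {poly F}) (q : I -> {poly F}) :
  (forall i, exists n, d %| q i * 'X^n) -> exists N, forall i, d %| q i * 'X^N.
Proof.
move=> /fin_all_exists[n dvd_n]; exists (\sum_i n i)%N => i.
apply: dvdp_trans (dvd_n i) (dvdp_mul (dvdpp _) (dvdp_exp2l _ _)).
by rewrite (bigD1 i) //= leq_addr.
Qed.

End PolyDivisibility.

Lemma Xn_sub1_Cyclotomic n L : (0 < n < L)%N ->
  'X^n - 1 = \prod_(1 <= m < L) 'Phi_m ^+ (m %| n).
Proof.
case/andP=> n0 nL; rewrite -prod_Cyclotomic //; symmetry.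
rewrite (eq_bigr (fun m => if (m %| n)%N then 'Phi_m else 1)); last first.
  by move=> m _; case: (m %| n)%N; rewrite ?expr1 ?expr0.
rewrite -big_mkcond -big_filter; apply: perm_big; apply: uniq_perm.
- by rewrite filter_uniq ?iota_uniq.
- exact: divisors_uniq.
move=> m; rewrite mem_filter mem_index_iota -dvdn_divisors //.
case: (boolP (m %| n)%N) => //= mn.
by rewrite (dvdn_gt0 n0 mn) (leq_ltn_trans (dvdn_leq n0 mn) nL).
Qed.

(* {n}_q! = prod_m Phi_m ^ (n / m): Phi_m divides {i}_q exactly when m | i. *)
Lemma qfact_Cyclotomic n L : (n < L)%N ->
  qfact n = \prod_(1 <= m < L) 'Phi_m ^+ (n %/ m).
Proof.
elim: n => [|n IH] nL.
  by rewrite /qfact /qpoch big_ord0 big1 // => m _; rewrite div0n.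
have qfactS : qfact n.+1 = ('X^(n.+1) - 1) * qfact n.
  by rewrite /qfact /qpoch big_ord_recl subn0.
rewrite qfactS IH ?(ltnW nL) // (@Xn_sub1_Cyclotomic n.+1 L) // -big_split /=.
by apply: eq_big_nat => m /andP[m0 _]; rewrite -exprD divnS.
Qed.

(* The exponent of Phi_m in f_{l,k}. *)
Definition fexp (l k m : nat) : nat := ((l - k) %/ m + k %/ m)%N.

Lemma fLK_Cyclotomic l k : (k <= l)%N ->
  fLK l k = \prod_(1 <= m < l.+1) 'Phi_m ^+ fexp l k m.
Proof.
move=> kl; rewrite /fLK !(@qfact_Cyclotomic _ l.+1) ?ltnS ?leq_subr // -big_split.
by apply: eq_bigr => m _; rewrite exprD.
Qed.

Lemma fLK_monic l k : (k <= l)%N -> fLK l k \is monic.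
Proof.
move=> kl; rewrite fLK_Cyclotomic //.
by apply: monic_prod => m _; apply/monic_exp/Cyclotomic_monic.
Qed.

Lemma map_Xn_sub1 n : pZtoQ ('X^n - 1) = 'X^n - 1.
Proof. by rewrite rmorphB rmorph1 /= map_polyXn. Qed.

(* Over Q the Phi_m are pairwise coprime, since Phi_i Phi_j divides the
   separable polynomial X^(ij) - 1. *)
Lemma coprimep_Cyclotomic i j : (0 < i)%N -> (0 < j)%N -> i != j ->
  coprimep (pZtoQ 'Phi_i) (pZtoQ 'Phi_j).
Proof.
move=> i0 j0 ij; pose n := (i * j)%N.
have n0 : (0 < n)%N by rewrite muln_gt0 i0 j0.
apply: (@separable_coprime _ ('X^n - 1)).
  by apply: separable_Xn_sub_1; rewrite pnatr_eq0 -lt0n.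
rewrite -map_Xn_sub1 -prod_Cyclotomic // -rmorphM dvdp_rat_int.
have in_div k : (k %| n)%N -> k \in divisors n by rewrite -dvdn_divisors.
rewrite (bigD1_seq i) ?divisors_uniq ?in_div ?dvdn_mulr //= -big_filter.
rewrite (bigD1_seq j) ?filter_uniq ?divisors_uniq //=.
  by rewrite mulrA dvdp_mulr.
by rewrite mem_filter eq_sym ij in_div ?dvdn_mull.
Qed.

(* Phi_m divides X^m - 1, which does not vanish at 0. *)
Lemma coprimep_Cyclotomic_X m : (0 < m)%N -> coprimep (pZtoQ 'Phi_m) 'X.
Proof.
move=> m0; apply: (@coprimep_dvdr _ ('X^m - 1)).
  rewrite -map_Xn_sub1 -prod_Cyclotomic // dvdp_rat_int.
  by rewrite (bigD1_seq m) ?divisors_uniq -?dvdn_divisors //= dvdp_mulr.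
by rewrite coprimepX /root !hornerE expr0n eqn0Ngt m0.
Qed.

(* t_{l,m} <= (l-k)/m + k/m, because the two remainders sum to at most
   2m - 2, so that (l+1)/m <= (l-k)/m + k/m + 1. *)
Lemma tLM_le_fexp l k m : (k <= l)%N -> (tLM l m <= fexp l k m)%N.
Proof.
move=> kl; rewrite /tLM /fexp; case: ifP => // /andP[m0 _].
rewrite leq_subLR -ltnS ltn_divLR //.
have := divn_eq (l - k) m; have := divn_eq k m.
have := ltn_pmod (l - k) m0; have := ltn_pmod k m0.
nia.
Qed.

(* The bound is attained at k = m - 1, where the second quotient vanishes. *)
Lemma fexp_pred_tLM l m : (1 <= m <= l)%N -> fexp l m.-1 m = tLM l m.
Proof.
move=> /[dup] /andP[m0 ml] ml'; rewrite /tLM ml' /fexp.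
rewrite (divn_small (m := m.-1)) ?prednK // addn0.
have -> : l.+1 = ((l - m.-1) + 1 * m)%N by lia.
by rewrite divnDMl // addnK.
Qed.

(* Gauss' lemma: a rational divisor of q in Z[X] that divides a monic
   polynomial of Z[X] has unit content, hence divides q in Z[X]. *)
Lemma int_dvd_of_rat_dvd (dp c q : {poly int}) :
  dp * c \is monic -> pZtoQ dp %| pZtoQ q -> exists r, q = dp * r.
Proof.
rewrite dvdp_rat_int => mon /dvdpP_int[r ->].
have unit_content : (zcontents dp)%:P * (zcontents c)%:P = 1.
  by rewrite -polyCM -zcontentsM zcontents_monic.
exists ((zcontents c)%:P * r).
rewrite {2}[dp]zpolyEprim -mul_polyC -[zprimitive dp * r]mul1r -unit_content.
ring.
Qed.

Lemma ldvd_lpoly_rat (d : laurent) (q : {poly int}) :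
  ldvd d (lpoly q) -> exists n, pZtoQ d.1 %| pZtoQ q * 'X^n.
Proof.
case=> c [k /=]; rewrite expr0 mulr1 => /(congr1 pZtoQ).
rewrite !rmorphM /= map_polyXn => E.
by exists (d.2 + k)%N; rewrite E dvdp_mulIl.
Qed.

Definition cycloGcd (l : nat) : {poly int} :=
  \prod_(1 <= m < l.+1) 'Phi_m ^+ tLM l m.

Lemma map_Cyclotomic_prod (s : seq nat) (e : nat -> nat) :
  pZtoQ (\prod_(m <- s) 'Phi_m ^+ e m) = \prod_(m <- s) pZtoQ 'Phi_m ^+ e m.
Proof. by rewrite rmorph_prod; apply: eq_bigr => m _; rewrite rmorphXn. Qed.

Lemma fLK_cycloGcd l k : (k <= l)%N ->
  fLK l k = cycloGcd l * \prod_(1 <= m < l.+1) 'Phi_m ^+ (fexp l k m - tLM l m).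
Proof.
move=> kl; rewrite fLK_Cyclotomic // /cycloGcd -big_split /=.
by apply: eq_bigr => m _; rewrite -exprD subnKC ?tLM_le_fexp.
Qed.

(* g is greatest over Q, up to a power of X: start from f_{l,0} X^N and lower
   the exponent of each Phi_m using f_{l,m-1} X^N, whose cofactor of
   Phi_m ^ t_{l,m} is prime to Phi_m. *)
Lemma rat_dvd_cycloGcd l (d : {poly rat}) N :
  (forall k, (k <= l)%N -> d %| pZtoQ (fLK l k) * 'X^N) ->
  d %| pZtoQ (cycloGcd l) * 'X^N.
Proof.
move=> dvd_f; set s := index_iota 1 l.+1.
have := dvd_f 0%N (leq0n l); rewrite fLK_Cyclotomic // map_Cyclotomic_prod.
rewrite /cycloGcd map_Cyclotomic_prod; apply: dvdp_lower_exponents.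
move=> m; rewrite mem_index_iota => /andP[m0 ml].
have Phi_j_pos j : j \in s -> (0 < j)%N by rewrite mem_index_iota => /andP[].
exists ((\prod_(j <- s | j != m) pZtoQ 'Phi_j ^+ fexp l m.-1 j) * 'X^N).
  rewrite coprimepMr coprimep_expr ?coprimep_Cyclotomic_X // andbT big_seq_cond.
  apply: (big_ind (coprimep (pZtoQ 'Phi_m))) => [|p q|j /andP[js jm]].
  - exact: coprimep1.
  - by rewrite coprimepMr => -> ->.
  - apply/coprimep_expr/coprimep_Cyclotomic; [exact: m0 | exact: Phi_j_pos |].
    by rewrite eq_sym.
have := dvd_f m.-1 (leq_trans (leq_pred m) ml).
rewrite fLK_Cyclotomic ?(leq_trans (leq_pred m) ml) // map_Cyclotomic_prod.
rewrite (bigD1_seq (m : nat)) ?iota_uniq ?mem_index_iota ?m0 //=.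
by rewrite fexp_pred_tLM ?m0 // mulrA.
Qed.

Theorem corollary4p2 (l : nat) :
  is_lgcd (fun k : 'I_l.+1 => lpoly (fLK l k))
          (lpoly (\prod_(1 <= m < l.+1) 'Phi_m ^+ tLM l m)).
Proof.
have kl (k : 'I_l.+1) : (k <= l)%N by rewrite -ltnS.
split=> [k | [dp dn] dvd_d].
  exists (\prod_(1 <= m < l.+1) 'Phi_m ^+ (fexp l k m - tLM l m)), 0%N.
  by rewrite /= !expr0 !mulr1 (fLK_cycloGcd (kl k)).
have [N dvdN] := dvdp_Xn_common (fun k => ldvd_lpoly_rat (dvd_d k)).
have dvd_g : pZtoQ dp %| pZtoQ (cycloGcd l * 'X^N).
  rewrite rmorphM /= map_polyXn; apply: rat_dvd_cycloGcd => k.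
  by rewrite -ltnS => lt_kl; apply: (dvdN (Ordinal lt_kl)).
have [c0 [n0 E0]] := dvd_d ord0.
have mon : dp * c0 \is monic.
  by move: E0; rewrite /= expr0 mulr1 => <-; rewrite monicMr ?monicXn ?fLK_monic.
have [r Er] := int_dvd_of_rat_dvd mon dvd_g.
exists (r * 'X^dn), N; rewrite /= expr0 mulr1 -/(cycloGcd l).
by rewrite addnC exprD mulrA Er mulrA.
Qed.
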